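(* Let $K\ge2$, $a,b\ge1$ be integers. For any scheme with uncoded cache placement for the $(K,a,b)$ coded caching problem for location-based content, with load $R$, one has $$R\ \ge\ \frac{1}{a}\,\alpha_0+\frac{K-1}{2aK}\,\alpha_1 .$$
   Context: For integers $x\le y$, $[x:y]=\{x,x+1,\dots,y\}$ and $[n]=[1:n]$. For integers $c$ and $m\ge1$, $\langle c\rangle_m$ denotes the unique element of $\{1,\dots,m\}$ congruent to $c$ modulo $m$. The $(K,a,b)$ coded caching problem for location-based content: a server has $N=K(a+b)$ files $W_1,\dots,W_N$, each consisting of $B$ independent uniformly distributed bits. There are $K$ cache nodes, each storing $MB$ bits, and $K$ users, user $k$ having free access to cache node $k$ only. For $k\in[K]$ define $\mathcal D_{k,1}=[(k-1)(a+b)+1:ka+(k-1)b]$, $\mathcal D_{k,2}=[ka+(k-1)b+1:k(a+b)]$, $\mathcal D_{k,3}=\mathcal D_{\langle k+1\rangle_K,1}$, and $\mathcal D_k=\mathcal D_{k,1}\cup\mathcal D_{k,2}\cup\mathcal D_{k,3}$. A scheme consists of placement $Z_k=\phi_k(W_1,\dots,W_N)\in\{0,1\}^{MB}$ (fixed before demands), for each demand vector $\mathbf d\in\mathcal D_1\times\cdots\times\mathcal D_K$ a broadcast message $X=\psi(\mathbf d,W_1,\dots,W_N)\in\{0,1\}^{RB}$, and decoders such that user $k$ recovers $W_{d_k}$ exactly from $(\mathbf d,Z_k,X)$. The placement is uncoded if each $Z_k$ is a subset of the file bits copied directly. For uncoded placement, for $i\in[N]$ and $\mathcal T\subseteq[K]$,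 $W_{i,\mathcal T}$ denotes the set of bits of $W_i$ stored in exactly the cache nodes in $\mathcal T$ (and in no other cache node), and $|W_{i,\mathcal T}|$ its number of bits. Let $\mathcal C_1=\bigcup_{k\in[K]}\mathcal D_{k,1}$, and define $\alpha_0=\sum_{i\in\mathcal C_1}|W_{i,\emptyset}|/B$, $\alpha_1=\sum_{i\in\mathcal C_1}\sum_{j\in[K]}|W_{i,\{j\}}|/B$. *)

(* Conventions: files and cache nodes are 0-based
   (file i : 'I_N stands for W_{i+1}, cache node k : 'I_K for node k+1). *)
From mathcomp Require Import all_boot all_order all_algebra.
Unset Printing Implicit Defensive.

(* 0-based version of D_{k+1,1} = [k(a+b)+1 : k(a+b)+a] (shifted by -1) *)
Definition Dk1 (K a b k : nat) : pred nat :=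
  fun i => (k * (a + b) <= i) && (i < k * (a + b) + a).
(* 0-based version of D_{k+1,2} = [k(a+b)+a+1 : (k+1)(a+b)] *)
Definition Dk2 (K a b k : nat) : pred nat :=
  fun i => (k * (a + b) + a <= i) && (i < k.+1 * (a + b)).
(* D_{k+1,3} = D_{<k+2>_K,1}, i.e. 0-based node (k+1) mod K *)
Definition Dk3 (K a b k : nat) : pred nat := Dk1 K a b ((k + 1) %% K).
Definition Dk (K a b k : nat) : pred nat :=
  fun i => [|| Dk1 K a b k i, Dk2 K a b k i | Dk3 K a b k i].

Definition C1 (K a b : nat) (i : 'I_(K * (a + b))) : bool :=
  [exists k : 'I_K, Dk1 K a b k i].

Definition library (N B : nat) := {ffun 'I_N -> {ffun 'I_B -> bool}}.

Definition demand (K N : nat) := {ffun 'I_K -> 'I_N}.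
Definition valid_demand (K a b : nat) (d : demand K (K * (a + b))) : Prop :=
  forall k : 'I_K, Dk K a b k (d k).

(* Uncoded placement: cache node k stores exactly the file bits at positions S k.
   Its content Z_k (as a function of the library) is those bits (the other
   positions are masked to false; S is fixed, so this carries the same info). *)
Definition cache_content (K N B : nat) (S : 'I_K -> {set 'I_N * 'I_B}) (k : 'I_K)
  (W : library N B) : {ffun 'I_N * 'I_B -> bool} :=
  [ffun p => (p \in S k) && W p.1 p.2].

Definition Wsize (K N B : nat) (S : 'I_K -> {set 'I_N * 'I_B}) (i : 'I_N)
  (T : {set 'I_K}) : nat :=
  #|[set j : 'I_B | [set k | (i, j) \in S k] == T]|.

Local Open Scope ring_scope.

Definition alpha0 (K a b B : nat) (S : 'I_K -> {set 'I_(K * (a + b)) * 'I_B}) : rat :=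
  (\sum_(i | C1 K a b i) Wsize K (K * (a + b)) B S i set0)%N%:R / B%:R.
Definition alpha1 (K a b B : nat) (S : 'I_K -> {set 'I_(K * (a + b)) * 'I_B}) : rat :=
  (\sum_(i | C1 K a b i) \sum_(j : 'I_K) Wsize K (K * (a + b)) B S i [set j])%N%:R / B%:R.

(* The proof is a genie-aided (acyclic index coding) argument.  Fix a demand d
   giving distinct files to distinct users and a ranking [pos] of the users.
   Successful decoding forces the broadcast message to determine every bit of
   a requested file that no user ranked at or before its requester caches:
   going up the ranking, each user's cache only involves such bits of users
   ranked strictly lower ([genie_decoding]).  Hence L is at least the number of
   these bits ([genie_bits_card]), which is at least the number of uncached
   bits plus the bits cached at exactly one user ranked after the requester
   ([genie_bits_lower]).

   For a position j < a and a rotation r of the users we use two valid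
   demands: user k asks for the j-th file of D_{k,1}, ranked by the backward
   cyclic distance from r, or for the j-th file of D_{k,3}, ranked by the
   reverse order.  A bit of a file of D_{k,1} cached only at node s is counted
   in at least K-1 of the K rotations ([rotations_cover]).  Summing over all
   rotations and positions gives 2K A0 + (K-1) A1 <= 2aK L in integers
   ([load_count_bound]), which is the theorem after division by 2aKB. *)
From mathcomp Require Import all_boot all_order all_algebra zify ring.

Lemma sum_cond_weighted (I : finType) (P : pred I) (F : I -> nat) :
  (\sum_(i | P i) F i = \sum_i P i * F i)%N.
Proof. by rewrite big_mkcond; apply: eq_bigr => i _; case: (P i); rewrite ?mul1n. Qed.

Lemma card_indicator_sum (T : finType) (A : {set T}) : (#|A| = \sum_x (x \in A))%N.
Proof. by rewrite -sum1_card big_mkcond; apply: eq_bigr => x _; case: (x \in A). Qed.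

Lemma sum_inj_le {I J : finType} (f : I -> J) (g : J -> nat) :
  injective f -> (\sum_i g (f i) <= \sum_j g j)%N.
Proof.
move=> f_inj; rewrite -(big_imset _ (in2W f_inj)) /=.
by rewrite [X in (_ <= X)%N](bigID (mem (f @: predT))) leq_addr.
Qed.

Section GenieBound.
Context {K N B L : nat}.
Variable (S : 'I_K -> {set 'I_N * 'I_B}).
Variables (enc : demand K N -> library N B -> {ffun 'I_L -> bool})
  (dec : 'I_K -> demand K N -> {ffun 'I_N * 'I_B -> bool} ->
         {ffun 'I_L -> bool} -> {ffun 'I_B -> bool}).
Variables (d : demand K N) (pos : 'I_K -> nat).

Definition holders (i : 'I_N) (j : 'I_B) : {set 'I_K} := [set k | (i, j) \in S k].

Lemma Wsize_holders (i : 'I_N) (T : {set 'I_K}) :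
  Wsize K N B S i T = (\sum_j (holders i j == T))%N.
Proof. by rewrite /Wsize card_indicator_sum; apply: eq_bigr => j _; rewrite inE. Qed.

Definition genie_bits : {set 'I_N * 'I_B} :=
  [set p | [exists k, (p.1 == d k) && [forall k', (pos k' <= pos k) ==> (p \notin S k')]]].

Hypothesis decodes : forall (W : library N B) (k : 'I_K),
  dec k d (cache_content K N B S k W) (enc d W) = W (d k).

Lemma genie_decoding (W W' : library N B) :
  enc d W = enc d W' ->
  (forall p, p \notin genie_bits -> W p.1 p.2 = W' p.1 p.2) ->
  forall k, W (d k) = W' (d k).
Proof.
move=> same_msg same_outside.
suff rank_ind n k : (pos k < n)%N -> W (d k) = W' (d k).
  by move=> k; apply: (rank_ind (pos k).+1).
elim: n k => [//|n IH] k lt_kn.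
rewrite -!decodes same_msg; congr (dec _ _ _ _); apply/ffunP => p; rewrite !ffunE.
have [pS|//] := boolP (p \in S k).
have [|/same_outside ->//] := boolP (p \in genie_bits).
rewrite inE => /existsP [k' /andP [/eqP p_k' /forallP not_cached]].
have lt_k'k : (pos k' < pos k)%N by move: (not_cached k); rewrite pS; case: leqP.
by rewrite /= p_k' (IH k') // (leq_trans lt_k'k lt_kn).
Qed.

Definition zero_extend (P : {set 'I_N * 'I_B}) (h : {ffun {p | p \in P} -> bool})
  : library N B :=
  [ffun i => [ffun j => if insub (i, j) is Some q then h q else false]].

Lemma zero_extend_in (P : {set 'I_N * 'I_B}) (h : {ffun {p | p \in P} -> bool})
  (q : {p | p \in P}) :
  zero_extend P h (val q).1 (val q).2 = h q.
Proof. by rewrite !ffunE -surjective_pairing valK. Qed.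

Lemma zero_extend_out (P : {set 'I_N * 'I_B}) (h : {ffun {p | p \in P} -> bool})
  (p : 'I_N * 'I_B) : p \notin P -> zero_extend P h p.1 p.2 = false.
Proof. by move=> pNP; rewrite !ffunE -surjective_pairing insubN. Qed.

(* The genie-aided bound: all genie bits are encoded injectively in L bits. *)
Lemma genie_bits_card : (#|genie_bits| <= L)%N.
Proof.
pose P := genie_bits.
have enc_inj : injective (fun h : {ffun {p | p \in P} -> bool} => enc d (zero_extend P h)).
  move=> h h' /= same_msg; apply/ffunP => q.
  have := valP q; rewrite inE => /existsP [k /andP [/eqP q_k _]].
  have agree : forall p, p \notin P -> zero_extend P h p.1 p.2 = zero_extend P h' p.1 p.2.
    by move=> p pNP; rewrite !zero_extend_out.
  by rewrite -!zero_extend_in q_k (genie_decoding _ _ same_msg agree).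
have := leq_card _ enc_inj.
by rewrite !card_ffun !card_bool card_ord card_sig leq_exp2l.
Qed.

Lemma in_genie_bits (k : 'I_K) (j : 'I_B) :
  (forall k', (pos k' <= pos k)%N -> k' \notin holders (d k) j) ->
  (d k, j) \in genie_bits.
Proof.
move=> uncached; rewrite inE; apply/existsP; exists k; rewrite eqxx /=.
by apply/forallP => k'; apply/implyP => /uncached; rewrite inE.
Qed.

Lemma genie_bit_count (k : 'I_K) (j : 'I_B) :
  ((holders (d k) j == set0) +
   \sum_(s | pos k < pos s) (holders (d k) j == [set s]) <= ((d k, j) \in genie_bits))%N.
Proof.
set H := holders (d k) j.
have [H0|H0] := eqVneq H set0.
  rewrite big1 => [|s _]; last by rewrite H0; case: eqP => // /setP /(_ s); rewrite !inE eqxx.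
  by rewrite lt0b; apply: in_genie_bits => k' _; rewrite -/H H0 inE.
rewrite add0n.
case: (pickP (fun s => (pos k < pos s)%N && (H == [set s]))) => [s0 | none]; last first.
  by rewrite big1 // => s lt_ks; move: (none s); rewrite lt_ks /= => ->.
move=> /andP [lt_ks0 /eqP Hs0].
rewrite (bigD1 s0) //= Hs0 eqxx big1 => [|s /andP [_ ns]]; last first.
  by rewrite (inj_eq set1_inj) eq_sym (negbTE ns).
rewrite addn0 lt0b; apply: in_genie_bits => k' le_k'k; rewrite -/H Hs0 inE.
by apply/eqP => k's0; move: le_k'k; rewrite k's0 leqNgt lt_ks0.
Qed.

Lemma genie_bits_lower : injective d ->
  (\sum_k (Wsize K N B S (d k) set0 +
           \sum_(s | pos k < pos s) Wsize K N B S (d k) [set s]) <= #|genie_bits|)%N.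
Proof.
move=> d_inj.
have -> : #|genie_bits| = (\sum_i \sum_j ((i, j) \in genie_bits))%N.
  by rewrite pair_big card_indicator_sum; apply: eq_bigr => [[]].
apply: leq_trans _ (sum_inj_le d (fun i => \sum_j ((i, j) \in genie_bits : nat))%N d_inj).
apply: leq_sum => k _.
rewrite Wsize_holders (eq_bigr _ (fun s _ => Wsize_holders (d k) [set s])).
rewrite exchange_big -big_split /=; apply: leq_sum => j _.
exact: genie_bit_count.
Qed.

End GenieBound.

(* Backward cyclic distance from r to k among K users; it ranks the users
   r, r-1, ..., r+1 (mod K).  Rotating r gives the K rankings averaged below. *)
Definition cdist {K : nat} (r k : 'I_K) : nat :=
  if (k <= r)%N then (r - k)%N else (r + K - k)%N.

Lemma cdist_lt {K : nat} (r k : 'I_K) : (cdist r k < K)%N.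
Proof. by have := ltn_ord r; have := ltn_ord k; rewrite /cdist; case: ifP; lia. Qed.

Lemma ord_pred_val {K : nat} (k : 'I_K) :
  ord_pred k = (if k == 0 :> nat then K.-1 else k.-1) :> nat.
Proof.
rewrite /=; have := ltn_ord k; case: eqP => [->|nz] lt_kK.
  by rewrite add0n modn_small //; lia.
have -> : ((k + K).-1 = k.-1 + K)%N by lia.
by rewrite modnDr modn_small //; lia.
Qed.

Lemma rotation_separates {K : nat} (r k s : 'I_K) :
  ((r != ord_pred k) <=
   (cdist r k < cdist r s) + (cdist r s < cdist r (ord_pred k)))%N.
Proof.
rewrite -(inj_eq (@ord_inj K)) /cdist !ord_pred_val.
have := ltn_ord r; have := ltn_ord k; have := ltn_ord s.
by case: (eqVneq (k : nat) 0) => [->|nz] /=; repeat case: ifP; lia.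
Qed.

Lemma rotations_cover {K : nat} (k s : 'I_K) :
  (K.-1 <= \sum_r ((cdist r k < cdist r s) + (cdist r s < cdist r (ord_pred k))))%N.
Proof.
apply: leq_trans _ (leq_sum (index_enum _) (fun r _ => rotation_separates r k s)).
rewrite (bigD1 (ord_pred k)) //= eqxx add0n.
rewrite (eq_bigr (fun _ => 1%N)) => [|r /negbTE -> //].
by rewrite sum1_card cardC1 card_ord.
Qed.

Section LocationBasedDemands.
Variables (K a b : nat).
Local Notation N := (K * (a + b)).

Lemma C1_file_subproof (k : 'I_K) (j : 'I_a) : (k * (a + b) + j < N)%N.
Proof.
have lt_ja := ltn_ord j; have lt_kK := ltn_ord k.
have : (k.+1 * (a + b) <= N)%N by rewrite leq_mul2r lt_kK orbT.
by rewrite mulSn; lia.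
Qed.

Definition C1_file (k : 'I_K) (j : 'I_a) : 'I_N := Ordinal (C1_file_subproof k j).

Lemma C1_fileP (k : 'I_K) (j : 'I_a) : Dk1 K a b k (C1_file k j).
Proof. by rewrite /Dk1 /= leq_addr ltn_add2l ltn_ord. Qed.

Lemma C1_file_inj : injective (fun p : 'I_K * 'I_a => C1_file p.1 p.2).
Proof.
move=> [k j] [k' j'] /(congr1 val) /= same.
have lt_j := ltn_ord j; have lt_j' := ltn_ord j'.
have same_k : k = k' :> nat.
  have := congr1 (fun x => x %/ (a + b))%N same.
  by rewrite /= !divnMDl ?divn_small ?addn0 //; lia.
by congr (_, _); apply: val_inj => //=; move: same; rewrite same_k => /addnI.
Qed.

Lemma sum_C1 (F : 'I_N -> nat) :
  (\sum_(i | C1 K a b i) F i = \sum_k \sum_j F (C1_file k j))%N.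
Proof.
rewrite pair_big /= -(big_imset _ (in2W C1_file_inj)) /=.
apply: eq_bigl => i; apply/idP/imsetP => [/existsP [k /andP [ge_i lt_i]] | [[k j] _ ->]].
  have lt_j : (i - k * (a + b) < a)%N by lia.
  by exists (k, Ordinal lt_j) => //; apply: val_inj => /=; lia.
by apply/existsP; exists k; exact: C1_fileP.
Qed.

(* User k requests the j-th file of D_{k,1}, resp. of D_{k,3} = D_{k+1,1}. *)
Definition own_demand (j : 'I_a) : demand K N := [ffun k => C1_file k j].
Definition next_demand (j : 'I_a) : demand K N := [ffun k => C1_file (ordS k) j].

Lemma own_demand_valid (j : 'I_a) : valid_demand K a b (own_demand j).
Proof. by move=> k; rewrite /Dk ffunE C1_fileP. Qed.

Lemma next_demand_valid (j : 'I_a) : valid_demand K a b (next_demand j).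
Proof. by move=> k; rewrite /Dk /Dk3 ffunE addn1; apply/or3P/Or33/C1_fileP. Qed.

Lemma own_demand_inj (j : 'I_a) : injective (own_demand j).
Proof. by move=> k k'; rewrite !ffunE => /(C1_file_inj (_, _) (_, _)) /(congr1 fst). Qed.

Lemma next_demand_inj (j : 'I_a) : injective (next_demand j).
Proof.
by move=> k k'; rewrite !ffunE => /(C1_file_inj (_, _) (_, _)) /(congr1 fst) /ordS_inj.
Qed.

Section LoadBound.
Variables (B L : nat) (S : 'I_K -> {set 'I_N * 'I_B}).
Variables (enc : demand K N -> library N B -> {ffun 'I_L -> bool})
  (dec : 'I_K -> demand K N -> {ffun 'I_N * 'I_B -> bool} ->
         {ffun 'I_L -> bool} -> {ffun 'I_B -> bool}).
Hypothesis decodes : forall d : demand K N, valid_demand K a b d ->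
  forall (W : library N B) (k : 'I_K),
    dec k d (cache_content K N B S k W) (enc d W) = W (d k).

Local Notation W0 k j := (Wsize K N B S (C1_file k j) set0).
Local Notation W1 k j s := (Wsize K N B S (C1_file k j) [set s]).

Lemma own_demand_bound (j : 'I_a) (r : 'I_K) :
  (\sum_k (W0 k j + \sum_s (cdist r k < cdist r s) * W1 k j s) <= L)%N.
Proof.
apply: leq_trans _ (genie_bits_card S enc dec _ (cdist r) (decodes _ (own_demand_valid j))).
apply: leq_trans _ (genie_bits_lower S _ (cdist r) (own_demand_inj j)).
by apply: eq_leq; apply: eq_bigr => k _; rewrite ffunE [in RHS]sum_cond_weighted.
Qed.

(* Genie bound for [next_demand j], users ranked forwards towards r; after
   renaming user k into k-1, user k requests a file of D_{k,1}. *)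
Lemma next_demand_bound (j : 'I_a) (r : 'I_K) :
  (\sum_k (W0 k j + \sum_s (cdist r s < cdist r (ord_pred k)) * W1 k j s) <= L)%N.
Proof.
pose rank k := (K - cdist r k)%N.
apply: leq_trans _ (genie_bits_card S enc dec _ rank (decodes _ (next_demand_valid j))).
apply: leq_trans _ (genie_bits_lower S _ rank (next_demand_inj j)).
apply: eq_leq; rewrite [RHS](reindex_inj (@ord_pred_inj K)).
apply: eq_bigr => k _; rewrite ffunE ord_predK [in RHS]sum_cond_weighted.
congr (_ + _); apply: eq_bigr => s _; congr (nat_of_bool _ * _).
have := cdist_lt r s; have := cdist_lt r (ord_pred k).
by rewrite /rank => lt_k lt_s; apply/idP/idP; lia.
Qed.

Lemma rotation_bound (j : 'I_a) (r : 'I_K) :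
  (\sum_k (2 * W0 k j + \sum_s ((cdist r k < cdist r s) +
      (cdist r s < cdist r (ord_pred k))) * W1 k j s) <= 2 * L)%N.
Proof.
rewrite mul2n -addnn.
apply: leq_trans _ (leq_add (own_demand_bound j r) (next_demand_bound j r)).
rewrite -big_split; apply: eq_leq; apply: eq_bigr => k _ /=.
under eq_bigr => s _ do rewrite mulnDl.
by rewrite big_split /=; lia.
Qed.

Lemma position_bound (j : 'I_a) :
  (\sum_k (2 * K * W0 k j + K.-1 * \sum_s W1 k j s) <= K * (2 * L))%N.
Proof.
have := leq_sum (index_enum _) (fun (r : 'I_K) (_ : true) => rotation_bound j r).
rewrite sum_nat_const card_ord; apply: leq_trans.
rewrite exchange_big; apply: leq_sum => k _ /=.
rewrite big_split sum_nat_const card_ord mulnA [K * 2]mulnC leq_add2l.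
rewrite exchange_big big_distrr; apply: leq_sum => s _ /=.
by rewrite -big_distrl leq_mul2r rotations_cover orbT.
Qed.

Lemma load_count_bound :
  (2 * K * (\sum_(i | C1 K a b i) Wsize K N B S i set0) +
   K.-1 * (\sum_(i | C1 K a b i) \sum_s Wsize K N B S i [set s])
   <= a * (K * (2 * L)))%N.
Proof.
have := leq_sum (index_enum _) (fun (j : 'I_a) (_ : true) => position_bound j).
rewrite sum_nat_const card_ord; apply: leq_trans; apply: eq_leq.
rewrite !sum_C1 !big_distrr -big_split [RHS]exchange_big.
by apply: eq_bigr => k _; rewrite [RHS]big_split !big_distrr.
Qed.

End LoadBound.
End LocationBasedDemands.

Import Order.TTheory GRing.Theory Num.Theory.
Local Open Scope ring_scope.

Lemma scaled_count_bound (K a B L A0 A1 : nat) :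
  (1 <= K)%N -> (1 <= a)%N -> (0 < B)%N ->
  (2 * K * A0 + K.-1 * A1 <= a * (K * (2 * L)))%N ->
  (a%:R)^-1 * (A0%:R / B%:R) + (K%:R - 1) / (2 * a%:R * K%:R) * (A1%:R / B%:R)
    <= L%:R / B%:R :> rat.
Proof.
move=> K_gt0 a_gt0 B_gt0; rewrite -(ler_nat rat) natrD !natrM -subn1 natrB // => count.
have a_neq0 : a%:R != 0 :> rat by rewrite pnatr_eq0 -lt0n.
have K_neq0 : K%:R != 0 :> rat by rewrite pnatr_eq0 -lt0n.
have B_neq0 : B%:R != 0 :> rat by rewrite pnatr_eq0 -lt0n.
have scale_pos : 0 < 2 * a%:R * K%:R * B%:R :> rat by rewrite !mulr_gt0 ?ltr0n.
rewrite -(ler_pM2r scale_pos); apply: le_trans (le_trans _ count) _;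
  rewrite le_eqVlt; apply/orP; left; apply/eqP; field.
  by rewrite a_neq0 K_neq0 B_neq0.
exact: B_neq0.
Qed.

Theorem mainTheorem7 (K a b B Mbits L : nat)
  (S : 'I_K -> {set 'I_(K * (a + b)) * 'I_B})
  (enc : demand K (K * (a + b)) -> library (K * (a + b)) B -> {ffun 'I_L -> bool})
  (dec : 'I_K -> demand K (K * (a + b)) -> {ffun 'I_(K * (a + b)) * 'I_B -> bool} ->
         {ffun 'I_L -> bool} -> {ffun 'I_B -> bool}) :
  (2 <= K)%N -> (1 <= a)%N -> (1 <= b)%N -> (0 < B)%N ->
  (forall k : 'I_K, #|S k| <= Mbits)%N ->
  (forall d : demand K (K * (a + b)), valid_demand K a b d ->
     forall (W : library (K * (a + b)) B) (k : 'I_K),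
       dec k d (cache_content K (K * (a + b)) B S k W) (enc d W) = W (d k)) ->
  (a%:R)^-1 * alpha0 K a b B S + (K%:R - 1) / (2 * a%:R * K%:R) * alpha1 K a b B S
    <= L%:R / B%:R :> rat.
Proof.
move=> K_ge2 a_gt0 _ B_gt0 _ decodes.
apply: scaled_count_bound => //; first exact: ltnW.
exact: load_count_bound decodes.
Qed.
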